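(* Let $R,S$ be rings and let $(\mathbf{L},\mathbf{F},\mathbf{R})$ be an adjoint triple with $\mathbf{F}:{}_R\mathcal{M}\to{}_S\mathcal{M}$ and $\mathbf{L},\mathbf{R}:{}_S\mathcal{M}\to{}_R\mathcal{M}$ (i.e. $\mathbf{L}\dashv\mathbf{F}\dashv\mathbf{R}$). The following statements are equivalent: (i) $(\mathbf{L},\mathbf{F},\mathbf{R})$ is a quasi-Frobenius triple, i.e. $\mathbf{F}$ is a quasi-Frobenius functor; (ii) there exists a functor $\mathbf{F}_1:{}_R\mathcal{M}\to{}_S\mathcal{M}$ such that $(\mathbf{F},\mathbf{R},\mathbf{F}_1)$ is a quasi-Frobenius triple for ${}_S\mathcal{M}$ and ${}_R\mathcal{M}$, i.e. $\mathbf{R}$ is a quasi-Frobenius functor; (iii) there exists a functor $\mathbf{F}_{-1}:{}_R\mathcal{M}\to{}_S\mathcal{M}$ such that $(\mathbf{F}_{-1},\mathbf{L},\mathbf{F})$ is a quasi-Frobenius triple for ${}_S\mathcal{M}$ and ${}_R\mathcal{M}$, i.e. $\mathbf{L}$ is a quasi-Frobenius functor.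
   Context: For functors $\mathbf{G},\mathbf{H}$ with the same source and target: $\mathbf{G}$ divides $\mathbf{H}$ if there are $n\ge1$ and natural transformations $\phi:\mathbf{G}\to\mathbf{H}^n$, $\psi:\mathbf{H}^n\to\mathbf{G}$ with $\psi\circ\phi=1$ ($\mathbf{H}^n(X)=\mathbf{H}(X)^n$); similar means mutually dividing. A quasi-Frobenius triple $(\mathbf{G},\mathbf{K},\mathbf{H})$ consists of functors with $\mathbf{G}$ left adjoint to $\mathbf{K}$, $\mathbf{H}$ right adjoint to $\mathbf{K}$, and $\mathbf{G}$ similar to $\mathbf{H}$; then $\mathbf{K}$ is called a quasi-Frobenius functor. *)

(* Module categories R-Mod are modelled by lmodType R
   (left R-modules), morphisms by {linear M -> N}. *)
From HB Require Import structures.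
From mathcomp Require Import all_boot all_algebra.
Set Implicit Arguments. Unset Strict Implicit. Unset Printing Implicit Defensive.
Import GRing.Theory.
Local Open Scope ring_scope.

(* A functor  R-Mod -> S-Mod  (not assumed additive). *)
Record Functor (R S : pzRingType) := {
  fobj :> lmodType R -> lmodType S;
  fmap : forall M N : lmodType R, {linear M -> N} -> {linear fobj M -> fobj N};
  fmap_id : forall (M : lmodType R) (x : fobj M),
      fmap (idfun : {linear M -> M}) x = x;
  fmap_comp : forall (M N P : lmodType R) (f : {linear M -> N}) (g : {linear N -> P})
      (x : fobj M), fmap (g \o f : {linear M -> P}) x = fmap g (fmap f x) }.

Arguments fmap {R S} f0 {M N} f.

Definition adjoint (R S : pzRingType) (G : Functor R S) (K : Functor S R) : Prop :=
  exists (eta : forall M : lmodType R, {linear M -> K (G M)})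
         (eps : forall N : lmodType S, {linear G (K N) -> N}),
    [/\ (forall (M M' : lmodType R) (f : {linear M -> M'}) (x : M),
           eta M' (f x) = fmap K (fmap G f) (eta M x)),
        (forall (N N' : lmodType S) (g : {linear N -> N'}) (y : G (K N)),
           eps N' (fmap G (fmap K g) y) = g (eps N y)),
        (forall (M : lmodType R) (x : G M), eps (G M) (fmap G (eta M) x) = x) &
        (forall (N : lmodType S) (y : K N), fmap K (eps N) (eta (K N) y) = y)].

(* G divides H: natural phi : G -> H^n, psi : H^n -> G with psi o phi = 1,
   where H^n(X) = {ffun 'I_n -> H X} and H^n(f) acts componentwise. *)
Definition divides (R S : pzRingType) (G H : Functor R S) : Prop :=
  exists (n : nat)
         (phi : forall M : lmodType R, {linear G M -> {ffun 'I_n -> H M}})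
         (psi : forall M : lmodType R, {linear {ffun 'I_n -> H M} -> G M}),
    [/\ (1 <= n)%N,
        (forall (M N : lmodType R) (f : {linear M -> N}) (x : G M),
           phi N (fmap G f x) = [ffun i => fmap H f (phi M x i)]),
        (forall (M N : lmodType R) (f : {linear M -> N}) (v : {ffun 'I_n -> H M}),
           psi N [ffun i => fmap H f (v i)] = fmap G f (psi M v)) &
        (forall (M : lmodType R) (x : G M), psi M (phi M x) = x)].

Definition similar (R S : pzRingType) (G H : Functor R S) : Prop :=
  divides G H /\ divides H G.

Definition qF_triple (R S : pzRingType) (G : Functor R S) (K : Functor S R)
  (H : Functor R S) : Prop :=
  [/\ adjoint G K, adjoint K H & similar G H].

Definition qF_functor (R S : pzRingType) (K : Functor S R) : Prop :=
  exists (G H : Functor R S), qF_triple G K H.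

From Pilot Require Import Defs.
From HB Require Import structures.
From mathcomp Require Import all_boot all_algebra.
From Stdlib Require Import FunctionalExtensionality ProofIrrelevance.
Set Implicit Arguments. Unset Strict Implicit. Unset Printing Implicit Defensive.
Import GRing.Theory.
Local Open Scope ring_scope.

(* A natural retraction G -> G' -> G between left adjoints induces one
   between their right adjoints through the mates, and conversely; since
   G -| K gives G^n -| K^n (finite direct sums are biproducts), divisibility
   and similarity pass from left adjoints to right adjoints and back.
   Moreover a natural retract G of a functor H with a right adjoint J has a
   right adjoint itself: the idempotent of H given by the retraction
   transposes to a natural idempotent of J, whose modules of fixed points
   form the adjoint (and dually for left adjoints).
   If L -| F -| R and L ~ R, then R is a retract of some L^n, which has the
   right adjoint F^n, so R has a right adjoint F1, and F ~ F1 as right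
   adjoints of similar functors; conversely F ~ F1 gives L ~ R as left
   adjoints of F and R.  Statement (iii) is the mirror image. *)

Lemma linear_ext (A : pzRingType) (U V : lmodType A) (f g : {linear U -> V}) :
  f =1 g -> f = g.
Proof.
case: f => f [[f_add] [f_scale]]; case: g => g [[g_add] [g_scale]] /= fg.
have E : f = g by exact: functional_extensionality.
subst g.
by rewrite (proof_irrelevance _ f_add g_add) (proof_irrelevance _ f_scale g_scale).
Qed.

Section FunctorLemmas.
Variables (A B : pzRingType) (F : Functor A B).

Lemma fmap_ext (M N : lmodType A) (f g : {linear M -> N}) :
  f =1 g -> fmap F f =1 fmap F g.
Proof. by move=> /linear_ext ->. Qed.

Lemma fmap_compE (M N P : lmodType A) (f : {linear M -> N}) (g : {linear N -> P})
    (h : {linear M -> P}) :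
  h =1 g \o f -> fmap F h =1 fmap F g \o fmap F f.
Proof. by move=> /fmap_ext hE x; rewrite hE fmap_comp. Qed.

End FunctorLemmas.

Section AdjunctionData.
Variables (A B : pzRingType).

Record adjunction (G : Functor A B) (K : Functor B A) := Adjunction {
  adj_unit : forall M : lmodType A, {linear M -> K (G M)};
  adj_counit : forall N : lmodType B, {linear G (K N) -> N};
  adj_unit_nat : forall (M M' : lmodType A) (f : {linear M -> M'}) (x : M),
    adj_unit M' (f x) = fmap K (fmap G f) (adj_unit M x);
  adj_counit_nat : forall (N N' : lmodType B) (g : {linear N -> N'}) (y : G (K N)),
    adj_counit N' (fmap G (fmap K g) y) = g (adj_counit N y);
  adj_triangleG : forall (M : lmodType A) (x : G M),
    adj_counit (G M) (fmap G (adj_unit M) x) = x;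
  adj_triangleK : forall (N : lmodType B) (y : K N),
    fmap K (adj_counit N) (adj_unit (K N) y) = y }.

Lemma adjointP (G : Functor A B) (K : Functor B A) :
  adjoint G K <-> inhabited (adjunction G K).
Proof.
split; first by case=> eta [eps [? ? ? ?]]; constructor;
  exact: (Adjunction (adj_counit := eps)).
by case=> -[eta eps ? ? ? ?]; exists eta, eps.
Qed.

Record retraction (G H : Functor A B) := Retraction {
  ret_section : forall M : lmodType A, {linear G M -> H M};
  ret_retract : forall M : lmodType A, {linear H M -> G M};
  ret_section_nat : forall (M N : lmodType A) (f : {linear M -> N}) (x : G M),
    ret_section N (fmap G f x) = fmap H f (ret_section M x);
  ret_retract_nat : forall (M N : lmodType A) (f : {linear M -> N}) (v : H M),
    ret_retract N (fmap H f v) = fmap G f (ret_retract M v);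
  ret_sectionK : forall (M : lmodType A) (x : G M),
    ret_retract M (ret_section M x) = x }.

Section Transpose.
Variables (G : Functor A B) (K : Functor B A) (a : adjunction G K).
Variables (M : lmodType A) (N : lmodType B).

Lemma adj_raiseK (g : {linear M -> K N}) (x : M) :
  fmap K (adj_counit a N \o fmap G g : {linear _ -> _}) (adj_unit a M x) = g x.
Proof. by rewrite fmap_comp -adj_unit_nat adj_triangleK. Qed.

Lemma adj_lowerK (f : {linear G M -> N}) (y : G M) :
  adj_counit a N (fmap G (fmap K f \o adj_unit a M : {linear _ -> _}) y) = f y.
Proof. by rewrite fmap_comp adj_counit_nat adj_triangleG. Qed.

End Transpose.
End AdjunctionData.

Section Biproduct.
Variables (A : pzRingType) (V : lmodType A) (n : nat).

Definition ffun_incl (i : 'I_n) (x : V) : {ffun 'I_n -> V} :=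
  [ffun j => if j == i then x else 0].

Fact ffun_incl_is_linear i : linear (ffun_incl i).
Proof.
move=> c x y; apply/ffunP => j; rewrite !ffunE.
by case: (j == i); rewrite ?scaler0 ?addr0.
Qed.
HB.instance Definition _ i := GRing.isLinear.Build A V {ffun 'I_n -> V} *:%R
  (ffun_incl i) (ffun_incl_is_linear i).

Definition ffun_proj (i : 'I_n) (v : {ffun 'I_n -> V}) : V := v i.

Fact ffun_proj_is_linear i : linear (ffun_proj i).
Proof. by move=> c x y; rewrite /ffun_proj !ffunE. Qed.
HB.instance Definition _ i := GRing.isLinear.Build A {ffun 'I_n -> V} V *:%R
  (ffun_proj i) (ffun_proj_is_linear i).

Lemma sum_ffun_incl (v : {ffun 'I_n -> V}) : \sum_i ffun_incl i (v i) = v.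
Proof.
apply/ffunP => j; rewrite sum_ffunE (bigD1 j) //= ffunE eqxx big1 ?addr0 //.
by move=> i /negbTE ij; rewrite ffunE eq_sym ij.
Qed.

End Biproduct.

Section FunctorPower.
Variables (A B : pzRingType) (n : nat) (H : Functor A B).

Definition pow_fmap (M N : lmodType A) (f : {linear M -> N}) (v : {ffun 'I_n -> H M}) :
  {ffun 'I_n -> H N} := [ffun i => fmap H f (v i)].

Fact pow_fmap_is_linear M N f : linear (@pow_fmap M N f).
Proof. by move=> c x y; apply/ffunP => i; rewrite !ffunE linearP. Qed.
HB.instance Definition _ M N f := GRing.isLinear.Build B {ffun 'I_n -> H M}
  {ffun 'I_n -> H N} *:%R (@pow_fmap M N f) (pow_fmap_is_linear f).

Definition functor_pow : Functor A B.
Proof.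
refine (@Build_Functor A B (fun M => {ffun 'I_n -> H M} : lmodType B)
  (fun M N f => @pow_fmap M N f : {linear _ -> _}) _ _).
- by move=> M x; apply/ffunP => i; rewrite ffunE fmap_id.
- by move=> M N P f g x; apply/ffunP => i; rewrite !ffunE fmap_comp.
Defined.

End FunctorPower.

Lemma dividesP (A B : pzRingType) (G H : Functor A B) :
  divides G H <-> exists2 n, (0 < n)%N & inhabited (retraction G (functor_pow n H)).
Proof.
split; first by case=> n [phi [psi [n_gt0 phiN psiN psiK]]]; exists n => //;
  constructor; exact: (@Retraction _ _ _ (functor_pow n H) phi psi phiN psiN psiK).
by case=> n n_gt0 [[phi psi ? ? ?]]; exists n, phi, psi.
Qed.

Section PowerAdjunction.
Variables (A B : pzRingType) (n : nat) (G : Functor A B) (K : Functor B A).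
Variable a : adjunction G K.
Local Notation eta := (adj_unit a).
Local Notation eps := (adj_counit a).

Definition pow_unit (M : lmodType A) (x : M) : functor_pow n K (functor_pow n G M) :=
  [ffun i => fmap K (ffun_incl i : {linear G M -> {ffun 'I_n -> G M}}) (eta M x)].

Fact pow_unit_is_linear M : linear (@pow_unit M).
Proof. by move=> c x y; apply/ffunP => i; rewrite !ffunE !linearP. Qed.
HB.instance Definition _ (M : lmodType A) := GRing.isLinear.Build A M
  (functor_pow n K (functor_pow n G M)) *:%R
  (@pow_unit M) (@pow_unit_is_linear M).

Definition pow_counit (N : lmodType B) (w : functor_pow n G (functor_pow n K N)) : N :=
  \sum_i eps N (fmap G (ffun_proj i : {linear {ffun 'I_n -> K N} -> K N}) (w i)).

Fact pow_counit_is_linear N : linear (@pow_counit N).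
Proof.
move=> c x y; rewrite /pow_counit scaler_sumr -big_split; apply: eq_bigr => i _.
by rewrite !ffunE !linearP.
Qed.
HB.instance Definition _ (N : lmodType B) := GRing.isLinear.Build B
  (functor_pow n G (functor_pow n K N)) N *:%R
  (@pow_counit N) (@pow_counit_is_linear N).

Lemma pow_adjunction : adjunction (functor_pow n G) (functor_pow n K).
Proof.
apply: (@Adjunction _ _ _ _ (fun M => @pow_unit M : {linear _ -> _})
  (fun N => @pow_counit N : {linear _ -> _})).
- move=> M M' f x; apply/ffunP => i; rewrite /= !ffunE adj_unit_nat -!fmap_comp.
  apply: fmap_ext => y /=; apply/ffunP => j; rewrite !ffunE.
  by case: (j == i); rewrite ?raddf0.
- move=> N N' g y; rewrite /= /pow_counit linear_sum; apply: eq_bigr => i _.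
  rewrite ffunE -adj_counit_nat -!fmap_comp; congr (eps _ _).
  by apply: fmap_ext => z /=; rewrite /ffun_proj ffunE.
- move=> M x /=; rewrite /pow_counit -[RHS]sum_ffun_incl; apply: eq_bigr => i _.
  rewrite ffunE -fmap_comp.
  rewrite (@fmap_compE _ _ G _ _ _ (eta M)
    (fmap K (ffun_incl i : {linear G M -> {ffun 'I_n -> G M}}))); last first.
    by move=> z; rewrite /= /ffun_proj ffunE.
  by rewrite /= adj_counit_nat adj_triangleG.
- move=> N y; apply/ffunP => j; rewrite /= !ffunE -fmap_comp.
  rewrite (@fmap_compE _ _ K _ _ _ (fmap G (ffun_proj j)) (eps N)); last first.
    move=> z /=; rewrite /pow_counit (bigD1 j) //= big1 ?addr0.
      by rewrite /ffun_proj ffunE eqxx.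
    by move=> i /negbTE ij; rewrite /ffun_proj ffunE ij !raddf0.
  by rewrite /= -adj_unit_nat adj_triangleK.
Qed.

End PowerAdjunction.

Section Mates.
Variables (A B : pzRingType) (G G' : Functor A B) (K K' : Functor B A).
Variables (a : adjunction G K) (a' : adjunction G' K').
Local Notation eta := (adj_unit a).
Local Notation eps := (adj_counit a).
Local Notation eta' := (adj_unit a').
Local Notation eps' := (adj_counit a').

Section RightAdjoints.
Variable r : retraction G G'.
Local Notation phi := (ret_section r).
Local Notation psi := (ret_retract r).

Definition mate_sectionR (N : lmodType B) : {linear K N -> K' N} :=
  fmap K' (eps N \o psi (K N) : {linear _ -> _}) \o eta' (K N).
Definition mate_retractR (N : lmodType B) : {linear K' N -> K N} :=
  fmap K (eps' N \o phi (K' N) : {linear _ -> _}) \o eta (K' N).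

Lemma retraction_adjointR : retraction K K'.
Proof.
apply: (@Retraction _ _ _ _ mate_sectionR mate_retractR).
- move=> N N' g y; rewrite /= adj_unit_nat -!fmap_comp; apply: fmap_ext => z /=.
  by rewrite ret_retract_nat adj_counit_nat.
- move=> N N' g y; rewrite /= adj_unit_nat -!fmap_comp; apply: fmap_ext => z /=.
  by rewrite ret_section_nat adj_counit_nat.
- move=> N y; rewrite [mate_retractR N _]/= (adj_unit_nat a (mate_sectionR N)).
  rewrite -fmap_comp -[RHS](adj_triangleK a y); apply: fmap_ext => z /=.
  by rewrite ret_section_nat adj_lowerK /= ret_sectionK.
Qed.

End RightAdjoints.

Section LeftAdjoints.
Variable r : retraction K K'.
Local Notation phi := (ret_section r).
Local Notation psi := (ret_retract r).

Definition mate_sectionL (M : lmodType A) : {linear G M -> G' M} :=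
  eps (G' M) \o fmap G (psi (G' M) \o eta' M : {linear _ -> _}).
Definition mate_retractL (M : lmodType A) : {linear G' M -> G M} :=
  eps' (G M) \o fmap G' (phi (G M) \o eta M : {linear _ -> _}).

Lemma retraction_adjointL : retraction G G'.
Proof.
apply: (@Retraction _ _ _ _ mate_sectionL mate_retractL).
- move=> M M' f x; rewrite /= -adj_counit_nat -!fmap_comp; congr (eps _ _).
  by apply: fmap_ext => z /=; rewrite adj_unit_nat ret_retract_nat.
- move=> M M' f x; rewrite /= -adj_counit_nat -!fmap_comp; congr (eps' _ _).
  by apply: fmap_ext => z /=; rewrite adj_unit_nat ret_section_nat.
- move=> M x; rewrite [mate_sectionL M x]/= -(adj_counit_nat a (mate_retractL M)).
  rewrite -fmap_comp -[RHS](adj_triangleG a x); congr (eps _ _).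
  apply: fmap_ext => z /=.
  by rewrite -ret_retract_nat adj_raiseK /= ret_sectionK.
Qed.

End LeftAdjoints.
End Mates.

Section RetractionIdempotent.
Variables (A B : pzRingType) (G H : Functor A B) (r : retraction G H).

Definition ret_idem (M : lmodType A) : {linear H M -> H M} :=
  ret_section r M \o ret_retract r M.

Lemma ret_idem_nat (M N : lmodType A) (f : {linear M -> N}) (v : H M) :
  ret_idem N (fmap H f v) = fmap H f (ret_idem M v).
Proof. by rewrite /= ret_retract_nat ret_section_nat. Qed.

Lemma ret_idem_idem (M : lmodType A) (v : H M) :
  ret_idem M (ret_idem M v) = ret_idem M v.
Proof. by rewrite /= ret_sectionK. Qed.

End RetractionIdempotent.

Section FixedSubmodule.
Variables (A : pzRingType) (V : lmodType A) (e : {linear V -> V}).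

Definition fixed : pred V := [pred x | e x == x].

Fact fixed_submod_closed : submod_closed fixed.
Proof.
split; first by rewrite inE raddf0.
by move=> c x y; rewrite !inE => /eqP ex /eqP ey; rewrite linearP ex ey.
Qed.
HB.instance Definition _ := GRing.isSubmodClosed.Build A V fixed fixed_submod_closed.

Record fixmod := FixMod { fixval : V; fixvalP : fixval \in fixed }.
HB.instance Definition _ := [isSub for fixval].
HB.instance Definition _ := [Choice of fixmod by <:].
HB.instance Definition _ := [SubChoice_isSubLmodule of fixmod by <:].

Lemma fixmod_fixed (x : fixmod) : e (val x) = val x.
Proof. exact/eqP/fixvalP. Qed.

Variables (W : lmodType A) (h : {linear W -> V}) (h_fixed : forall w, e (h w) = h w).

Definition fixmod_corestr (w : W) : fixmod := FixMod (introT eqP (h_fixed w)).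

Fact fixmod_corestr_is_linear : linear fixmod_corestr.
Proof. by move=> c u v; apply: val_inj; rewrite /= linearP. Qed.
HB.instance Definition _ := GRing.isLinear.Build A W fixmod *:%R
  fixmod_corestr fixmod_corestr_is_linear.

Lemma fixmod_corestrE (w : W) : val (fixmod_corestr w) = h w.
Proof. by []. Qed.

End FixedSubmodule.

Section RetractRightAdjoint.
Variables (A B : pzRingType) (G H : Functor A B) (J : Functor B A).
Variables (a : adjunction H J) (r : retraction G H).
Local Notation eta := (adj_unit a).
Local Notation eps := (adj_counit a).
Local Notation phi := (ret_section r).
Local Notation psi := (ret_retract r).

(* The mate of [ret_idem r]; the right adjoint of [G] is its image. *)
Definition radj_idem (N : lmodType B) : {linear J N -> J N} :=
  fmap J (eps N \o ret_idem r (J N) : {linear _ -> _}) \o eta (J N).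

Lemma radj_idem_nat (N N' : lmodType B) (g : {linear N -> N'}) (y : J N) :
  radj_idem N' (fmap J g y) = fmap J g (radj_idem N y).
Proof.
rewrite /= adj_unit_nat -!fmap_comp; apply: fmap_ext => z /=.
by rewrite ret_retract_nat ret_section_nat adj_counit_nat.
Qed.

Lemma radj_idem_unit (M : lmodType A) (N : lmodType B) (f : {linear H M -> N})
    (x : M) :
  radj_idem N (fmap J f (eta M x))
  = fmap J (f \o ret_idem r M : {linear _ -> _}) (eta M x).
Proof.
rewrite /= adj_unit_nat -fmap_comp adj_unit_nat -fmap_comp; apply: fmap_ext => z /=.
by rewrite -fmap_comp ret_retract_nat ret_section_nat adj_lowerK.
Qed.

Definition retract_radj_obj (N : lmodType B) : lmodType A := fixmod (radj_idem N).

Lemma retract_radj_fmap_fixed (N N' : lmodType B) (g : {linear N -> N'})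
    (w : retract_radj_obj N) :
  radj_idem N' (fmap J g (val w)) = fmap J g (val w).
Proof. by rewrite radj_idem_nat fixmod_fixed. Qed.

Definition retract_radj_fmap (N N' : lmodType B) (g : {linear N -> N'}) :
    {linear retract_radj_obj N -> retract_radj_obj N'} :=
  @fixmod_corestr _ _ _ _ (fmap J g \o val : {linear _ -> _})
    (retract_radj_fmap_fixed g).

Definition retract_radj : Functor B A.
Proof.
refine (@Build_Functor B A retract_radj_obj retract_radj_fmap _ _).
- by move=> N y; apply: val_inj; rewrite /= fmap_id.
- by move=> N N' P f g y; apply: val_inj; rewrite /= fmap_comp.
Defined.

Lemma retract_radj_unit_fixed (M : lmodType A) (x : M) :
  radj_idem (G M) (fmap J (psi M) (eta M x)) = fmap J (psi M) (eta M x).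
Proof. by rewrite radj_idem_unit; apply: fmap_ext => y /=; rewrite ret_sectionK. Qed.

Definition retract_radj_unit (M : lmodType A) : {linear M -> retract_radj (G M)} :=
  @fixmod_corestr _ _ _ _ (fmap J (psi M) \o eta M : {linear _ -> _})
    (@retract_radj_unit_fixed M).

Definition retract_radj_counit (N : lmodType B) : {linear G (retract_radj N) -> N} :=
  eps N \o fmap H val \o phi (retract_radj N).

Lemma retract_radjunction : adjunction G retract_radj.
Proof.
apply: (@Adjunction _ _ _ _ retract_radj_unit retract_radj_counit).
- move=> M M' f x; apply: val_inj.
  rewrite /= adj_unit_nat -!fmap_comp; apply: fmap_ext => z /=.
  by rewrite ret_retract_nat.
- move=> N N' g y; rewrite /= ret_section_nat -fmap_comp.
  by rewrite (@fmap_compE _ _ H _ _ _ val (fmap J g)) // adj_counit_nat.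
- move=> M x; rewrite /= ret_section_nat -fmap_comp.
  rewrite -[RHS](ret_sectionK r x) -[in RHS](adj_lowerK a (psi M)).
  by congr (eps _ _); apply: fmap_ext.
- move=> N y; apply: val_inj; rewrite /= -fmap_comp -[RHS]fixmod_fixed /=.
  rewrite (adj_unit_nat a val y) -fmap_comp; apply: fmap_ext => z /=.
  by rewrite ret_retract_nat ret_section_nat.
Qed.

End RetractRightAdjoint.

Section RetractLeftAdjoint.
Variables (A B : pzRingType) (K J : Functor B A) (H : Functor A B).
Variables (a : adjunction H J) (r : retraction K J).
Local Notation eta := (adj_unit a).
Local Notation eps := (adj_counit a).
Local Notation phi := (ret_section r).
Local Notation psi := (ret_retract r).

(* The mate of [ret_idem r]; the left adjoint of [K] is its image. *)
Definition ladj_idem (M : lmodType A) : {linear H M -> H M} :=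
  eps (H M) \o fmap H (ret_idem r (H M) \o eta M : {linear _ -> _}).

Lemma ladj_idem_nat (M M' : lmodType A) (f : {linear M -> M'}) (x : H M) :
  ladj_idem M' (fmap H f x) = fmap H f (ladj_idem M x).
Proof.
rewrite /= -adj_counit_nat -!fmap_comp; congr (eps _ _); apply: fmap_ext => z /=.
by rewrite adj_unit_nat ret_retract_nat ret_section_nat.
Qed.

Lemma ladj_idem_idem (M : lmodType A) (x : H M) :
  ladj_idem M (ladj_idem M x) = ladj_idem M x.
Proof.
rewrite [ladj_idem M x]/= -(adj_counit_nat a (ladj_idem M)) -fmap_comp.
congr (eps _ _); apply: fmap_ext => z /=.
rewrite -ret_idem_nat adj_raiseK.
exact: ret_idem_idem.
Qed.

Definition retract_ladj_obj (M : lmodType A) : lmodType B := fixmod (ladj_idem M).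

Definition retract_ladj_proj (M : lmodType A) : {linear H M -> retract_ladj_obj M} :=
  fixmod_corestr (@ladj_idem_idem M).

Lemma retract_ladj_fmap_fixed (M M' : lmodType A) (f : {linear M -> M'})
    (w : retract_ladj_obj M) :
  ladj_idem M' (fmap H f (val w)) = fmap H f (val w).
Proof. by rewrite ladj_idem_nat fixmod_fixed. Qed.

Definition retract_ladj_fmap (M M' : lmodType A) (f : {linear M -> M'}) :
    {linear retract_ladj_obj M -> retract_ladj_obj M'} :=
  @fixmod_corestr _ _ _ _ (fmap H f \o val : {linear _ -> _})
    (retract_ladj_fmap_fixed f).

Definition retract_ladj : Functor A B.
Proof.
refine (@Build_Functor A B retract_ladj_obj retract_ladj_fmap _ _).
- by move=> M x; apply: val_inj; rewrite /= fmap_id.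
- by move=> M M' P f g x; apply: val_inj; rewrite /= fmap_comp.
Defined.

Definition retract_ladj_unit (M : lmodType A) : {linear M -> K (retract_ladj M)} :=
  psi (retract_ladj_obj M) \o fmap J (retract_ladj_proj M) \o eta M.

Definition retract_ladj_counit (N : lmodType B) : {linear retract_ladj (K N) -> N} :=
  eps N \o fmap H (phi N) \o val.

Lemma retract_ladjunction : adjunction retract_ladj K.
Proof.
apply: (@Adjunction _ _ _ _ retract_ladj_unit retract_ladj_counit).
- move=> M M' f x; rewrite /= adj_unit_nat -fmap_comp -ret_retract_nat -fmap_comp.
  congr (psi _ _); apply: fmap_ext => z /=; apply: val_inj.
  by rewrite !fixmod_corestrE ladj_idem_nat.
- move=> N N' g y; rewrite /= -!fmap_comp -adj_counit_nat -fmap_comp.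
  by congr (eps _ _); apply: fmap_ext => z /=; rewrite ret_section_nat.
- move=> M x; apply: val_inj; rewrite [LHS]/= -fmap_comp.
  rewrite (@fmap_compE _ _ H _ _ _ (ret_idem r (H M) \o eta M : {linear _ -> _})
    (fmap J (retract_ladj_proj M))); last first.
    by move=> y /=; rewrite ret_retract_nat ret_section_nat.
  rewrite [in LHS]/= adj_counit_nat fixmod_corestrE.
  by rewrite -[eps _ _]/(ladj_idem M (val x)) !fixmod_fixed.
- move=> N y; rewrite [retract_ladj_unit _ _]/= -ret_retract_nat -fmap_comp.
  set h : {linear H (K N) -> N} := eps N \o fmap H (phi N).
  have counit_proj :
      (retract_ladj_counit N \o retract_ladj_proj (K N) : {linear _ -> _}) =1
      eps N \o fmap H (fmap J h \o ret_idem r _ \o eta _ : {linear _ -> _}).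
    move=> z; transitivity (h (ladj_idem (K N) z)); first by [].
    rewrite [ladj_idem _ _]/= -adj_counit_nat -fmap_comp.
    by congr (eps _ _); apply: fmap_ext.
  rewrite (fmap_ext counit_proj) adj_raiseK /= -ret_idem_nat adj_raiseK.
  by rewrite /= !ret_sectionK.
Qed.

End RetractLeftAdjoint.

Section DivisibilityAndAdjoints.
Variables (A B : pzRingType).

Lemma divides_adjointR (G H : Functor A B) (K J : Functor B A) :
  adjoint G K -> adjoint H J -> divides G H -> divides K J.
Proof.
move=> /adjointP[a] /adjointP[b] /dividesP[n n_gt0 [r]].
apply/dividesP; exists n => //; constructor.
exact: retraction_adjointR a (pow_adjunction n b) r.
Qed.

Lemma divides_adjointL (G H : Functor A B) (K J : Functor B A) :
  adjoint G K -> adjoint H J -> divides K J -> divides G H.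
Proof.
move=> /adjointP[a] /adjointP[b] /dividesP[n n_gt0 [r]].
apply/dividesP; exists n => //; constructor.
exact: retraction_adjointL a (pow_adjunction n b) r.
Qed.

Lemma similar_adjointR (G H : Functor A B) (K J : Functor B A) :
  adjoint G K -> adjoint H J -> Defs.similar G H -> Defs.similar K J.
Proof.
move=> GK HJ [GH HG].
by split; [apply: divides_adjointR GK HJ GH | apply: divides_adjointR HJ GK HG].
Qed.

Lemma similar_adjointL (G H : Functor A B) (K J : Functor B A) :
  adjoint G K -> adjoint H J -> Defs.similar K J -> Defs.similar G H.
Proof.
move=> GK HJ [KJ JK].
by split; [apply: divides_adjointL GK HJ KJ | apply: divides_adjointL HJ GK JK].
Qed.

Lemma divides_right_adjoint (G H : Functor A B) (J : Functor B A) :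
  divides G H -> adjoint H J -> exists K : Functor B A, adjoint G K.
Proof.
move=> /dividesP[n _ [r]] /adjointP[b].
by exists (retract_radj (pow_adjunction n b) r); apply/adjointP; constructor;
  exact: retract_radjunction.
Qed.

Lemma divides_left_adjoint (K J : Functor B A) (H : Functor A B) :
  divides K J -> adjoint H J -> exists G : Functor A B, adjoint G K.
Proof.
move=> /dividesP[n _ [r]] /adjointP[b].
by exists (retract_ladj (pow_adjunction n b) r); apply/adjointP; constructor;
  exact: retract_ladjunction.
Qed.

End DivisibilityAndAdjoints.

Theorem theorem3p8 (R S : pzRingType)
  (L : Functor S R) (F : Functor R S) (Rt : Functor S R) :
  adjoint L F -> adjoint F Rt ->
  (qF_triple L F Rt <-> exists F1 : Functor R S, qF_triple F Rt F1) /\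
  (qF_triple L F Rt <-> exists Fm1 : Functor R S, qF_triple Fm1 L F).
Proof.
move=> LF FRt; split; split.
- case=> _ _ LRt.
  have [F1 RtF1] := divides_right_adjoint LRt.2 LF.
  by exists F1; split=> //; apply: similar_adjointR LF RtF1 LRt.
- by case=> F1 [_ RtF1 FF1]; split=> //; apply: similar_adjointL LF RtF1 FF1.
- case=> _ _ LRt.
  have [Fm1 Fm1L] := divides_left_adjoint LRt.1 FRt.
  by exists Fm1; split=> //; apply: similar_adjointL Fm1L FRt LRt.
- by case=> Fm1 [Fm1L _ Fm1F]; split=> //; apply: similar_adjointR Fm1L FRt Fm1F.
Qed.
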